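(* Let $X\subseteq\mathbb{R}^N$ be a closed convex set, $D\in\mathbb{R}^K$, $V$ a random $K\times N$ matrix, and $S(p):=\{x\in X:\mathbb{P}(Vx\le D)\ge p\}$. If $p\in(0,1]$ and $0\in S(p)$, then $S(p)$ is star-shaped with respect to the origin, i.e. $S(p)\ne\emptyset$ and $\{\lambda x:\lambda\in[0,1]\}\subseteq S(p)$ for every $x\in S(p)$.
   Context: The inequality $Vx\le D$ is componentwise. *)

From HB Require Import structures.
From mathcomp Require Import all_boot all_order all_algebra.
From mathcomp Require Import all_classical all_reals all_analysis.
Set Implicit Arguments. Unset Strict Implicit. Unset Printing Implicit Defensive.
Import Order.TTheory GRing.Theory Num.Theory.
Import numFieldNormedType.Exports.
Local Open Scope classical_set_scope.
Local Open Scope ring_scope.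

(* Vectors of R^N are column vectors 'cV[R]_N; V is a random K x N matrix,
   i.e. a map Omega -> 'M[R]_(K,N) with measurable entries. *)

Definition feas_event (R : realType) (Omega : Type) (K N : nat)
  (V : Omega -> 'M[R]_(K, N)) (D : 'cV[R]_K) (x : 'cV[R]_N) : set Omega :=
  [set w | forall i : 'I_K, (V w *m x) i ord0 <= D i ord0].

Definition Sp (R : realType) (d : measure_display) (Omega : measurableType d)
  (P : probability Omega R) (K N : nat) (X : set 'cV[R]_N)
  (V : Omega -> 'M[R]_(K, N)) (D : 'cV[R]_K) (p : R) : set 'cV[R]_N :=
  [set x | X x /\ (p%:E <= P (feas_event V D x))%E].

From HB Require Import structures.
From mathcomp Require Import all_boot all_order all_algebra.
From mathcomp Require Import all_classical all_reals all_analysis.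
Import Order.TTheory GRing.Theory Num.Theory.
Import numFieldNormedType.Exports.
Local Open Scope classical_set_scope.
Local Open Scope ring_scope.

(* Since [P(V 0 <= D) >= p > 0], the event [V 0 <= D] is nonempty, which forces
   [D >= 0].  Then [V x <= D] implies [V (l x) = l (V x) <= l D <= D] for
   [l] in [[0, 1]], so the event grows when [x] is shrunk towards the origin and
   its probability stays [>= p]; convexity of [X] keeps [l x = l x + (1 - l) 0]
   in [X]. *)

Lemma convex_set_scale (R : numDomainType) (M : lmodType R)
    (A : set (convex_lmodType M)) (x : convex_lmodType M) (l : R) :
  convex_set A -> A 0 -> A x -> 0 <= l <= 1 -> A (l *: x).
Proof.
move=> convA A0 Ax /andP[l0 l1].
have := convA x 0 (Itv01 l0 l1) (mem_set Ax) (mem_set A0).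
by rewrite inE /conv /= scaler0 addr0.
Qed.

Lemma measure_gt0_nonempty d (T : semiRingOfSetsType d) (R : numFieldType)
    (mu : {content set T -> \bar R}) (A : set T) :
  (0 < mu A)%E -> A !=set0.
Proof.
move=> muA_gt0; apply/set0P.
by apply: contra_ltN muA_gt0 => /eqP->; rewrite measure0.
Qed.

Section feasibility_event.
Set Implicit Arguments.
Variables (R : realType) (K N : nat) (Omega : Type).
Variables (V : Omega -> 'M[R]_(K, N)) (D : 'cV[R]_K).

Lemma feas_event0_rhs_ge0 (w : Omega) :
  feas_event V D 0 w -> forall i, 0 <= D i ord0.
Proof. by move=> Vw0 i; have := Vw0 i; rewrite mulmx0 mxE. Qed.

Lemma feas_event_scale (x : 'cV[R]_N) (l : R) :
  (forall i, 0 <= D i ord0) -> 0 <= l <= 1 ->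
  feas_event V D x `<=` feas_event V D (l *: x).
Proof.
move=> D_ge0 /andP[l0 l1] w Vwx i; rewrite -scalemxAr mxE.
apply: (@le_trans _ _ (l * D i ord0)); first exact: ler_wpM2l.
by rewrite -[leRHS]mul1r ler_wpM2r.
Qed.

End feasibility_event.

Lemma measurable_feas_event (R : realType) d (Omega : measurableType d)
    (K N : nat) (V : Omega -> 'M[R]_(K, N)) (D : 'cV[R]_K) (x : 'cV[R]_N) :
  (forall i j, measurable_fun setT (fun w => V w i j)) ->
  measurable (feas_event V D x).
Proof.
move=> mV.
have -> : feas_event V D x =
    \bigcap_(i in [set: 'I_K]) [set w | (V w *m x) i ord0 <= D i ord0].
  by apply/seteqP; split=> w /= Vwx i; [move=> _|]; apply: Vwx.
apply: fin_bigcap_measurable; first exact: finite_finset.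
move=> i _.
have mVx : measurable_fun setT (fun w => (V w *m x) i ord0).
  under eq_fun do rewrite mxE.
  apply: measurable_sum => j.
  exact: measurableT_comp (measurable_realfun.mulrr_measurable _) (mV i j).
have := mVx measurableT `]-oo, D i ord0]%classic (measurable_itv _).
by rewrite setTI; congr measurable; apply/seteqP; split=> w /=; rewrite in_itv.
Qed.

Theorem lemma2p14 (R : realType) (d : measure_display) (Omega : measurableType d)
  (P : probability Omega R) (K N : nat) (X : set 'cV[R]_N)
  (V : Omega -> 'M[R]_(K, N)) (D : 'cV[R]_K) (p : R)
  (hXclosed : closed X) (hXconvex : convex_set X)
  (hV : forall (i : 'I_K) (j : 'I_N), measurable_fun setT (fun w => V w i j))
  (hp : 0 < p <= 1) (h0 : Sp P X V D p 0) :
  Sp P X V D p !=set0 /\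
  (forall x, Sp P X V D p x ->
     forall lambda : R, 0 <= lambda <= 1 -> Sp P X V D p (lambda *: x)).
Proof.
split; first by exists 0.
case: h0 => X0 P0_ge_p; case/andP: hp => p_gt0 _.
have [w V0w] : feas_event V D 0 !=set0.
  by apply: (@measure_gt0_nonempty _ _ _ P); apply: lt_le_trans P0_ge_p.
have D_ge0 := feas_event0_rhs_ge0 V0w.
move=> x [Xx Px_ge_p] l l01; split; first exact: convex_set_scale.
apply: le_trans Px_ge_p _; apply: le_measure; rewrite ?inE.
- exact: measurable_feas_event.
- exact: measurable_feas_event.
- exact: feas_event_scale.
Qed.
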